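(* Let $c\in\mathbb{N}$, $\beta$ a parameter, and $\varphi:(x_0,x_1,x_2,x_3)\mapsto\big(x_1,x_2,x_3,(x_1x_3+\beta x_2^c)/x_0\big)$. Then the two-form $$\omega=\left(\frac{dx_0\wedge dx_1}{x_0x_1}+\frac{dx_0\wedge dx_3}{x_0x_3}+\frac{dx_2\wedge dx_3}{x_2x_3}\right)-c\left(\frac{dx_0\wedge dx_2}{x_0x_2}+\frac{dx_1\wedge dx_3}{x_1x_3}\right)+(c+1)\frac{dx_1\wedge dx_2}{x_1x_2}$$ is preserved by $\varphi$ (i.e. $\varphi^*\omega=\omega$), and $\omega$ is symplectic for $c\neq 2$. When $c=2$, $\omega$ is degenerate, being the pullback of the two-form $(u_1u_2)^{-1}\,du_1\wedge du_2$ under the map $(x_0,x_1,x_2,x_3)\mapsto(u_1,u_2)=\big(x_0x_2/x_1^2,\;x_1x_3/x_2^2\big)$.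
   Context: $\mathbb{N}$ includes $0$. *)

From HB Require Import structures.
From mathcomp Require Import all_boot all_order all_algebra.
From mathcomp Require Import all_classical all_reals all_analysis.
Set Implicit Arguments. Unset Strict Implicit. Unset Printing Implicit Defensive.
Import Order.TTheory GRing.Theory Num.Theory.
Import numFieldNormedType.Exports.
Local Open Scope ring_scope.

Section Forms.
Variable R : realType.

Definition xc {m : nat} (x : 'rV[R]_m.+1) (i : nat) : R := x ord0 (inord i).

(* A (differential) 2-form on an open part of R^n: at each point x an
   (alternating) bilinear form on tangent vectors. *)
Definition form2 (n : nat) := 'rV[R]_n -> 'rV[R]_n -> 'rV[R]_n -> R.

Definition wedge {m : nat} (i j : nat) (v w : 'rV[R]_m.+1) : R :=
  xc v i * xc w j - xc v j * xc w i.

Definition logwedge {m : nat} (i j : nat) (x v w : 'rV[R]_m.+1) : R :=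
  wedge i j v w / (xc x i * xc x j).

Definition pullback2 (n m : nat) (f : 'rV[R]_n -> 'rV[R]_m) (eta : form2 m) : form2 n :=
  fun x v w => eta (f x) ('d f x v) ('d f x w).

Definition nondeg_bilin (n : nat) (b : 'rV[R]_n -> 'rV[R]_n -> R) : Prop :=
  forall v, (forall w, b v w = 0) -> v = 0.

(* closedness d omega = 0 on U, via the invariant formula with constant
   vector fields u v w: d omega(u,v,w) = D_u(omega(v,w)) - D_v(omega(u,w)) + D_w(omega(u,v)) *)
Definition closed2 (n : nat) (U : set 'rV[R]_n) (omega : form2 n) : Prop :=
  forall x, U x -> forall u v w : 'rV[R]_n,
    'D_u (fun y => omega y v w) x - 'D_v (fun y => omega y u w) x
      + 'D_w (fun y => omega y u v) x = 0.

Definition symplectic (n : nat) (U : set 'rV[R]_n) (omega : form2 n) : Prop :=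
  closed2 U omega /\ forall x, U x -> nondeg_bilin (omega x).

Definition phi (c : nat) (beta : R) (x : 'rV[R]_4) : 'rV[R]_4 :=
  \row_(i < 4) nth 0 [:: xc x 1; xc x 2; xc x 3;
     (xc x 1 * xc x 3 + beta * xc x 2 ^+ c) / xc x 0] i.

Definition omega (c : nat) : form2 4 := fun x v w =>
  (logwedge 0 1 x v w + logwedge 0 3 x v w + logwedge 2 3 x v w)
  - c%:R * (logwedge 0 2 x v w + logwedge 1 3 x v w)
  + (c%:R + 1) * logwedge 1 2 x v w.

Definition psi (x : 'rV[R]_4) : 'rV[R]_2 :=
  \row_(i < 2) nth 0 [:: xc x 0 * xc x 2 / xc x 1 ^+ 2;
                         xc x 1 * xc x 3 / xc x 2 ^+ 2] i.

Definition eta2 : form2 2 := fun u v w => logwedge 0 1 u v w.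

Definition torus4 : set 'rV[R]_4 := [set x | forall i : 'I_4, x ord0 i != 0].

End Forms.

(* In logarithmic coordinates y_i = log x_i the form omega has constant
   coefficients, so it is closed, and its coefficient matrix has Pfaffian
   (1 + c)(2 - c): it is nondegenerate exactly when c <> 2.  Invariance under
   phi is a rational identity once the Jacobian of phi is known; its only
   nontrivial row is the logarithmic differential of
   x_0 phi_3 = x_1 x_3 + beta x_2^c.  For c = 2 the map psi is invariant under
   the scalings x_i |-> t^(i+1) x_i, whose generator spans a kernel direction
   of omega = psi^* eta2. *)

From HB Require Import structures.
From mathcomp Require Import all_boot all_order all_algebra.
From mathcomp Require Import all_classical all_reals all_analysis.
From mathcomp Require Import ring.
Import Order.TTheory GRing.Theory Num.Theory.
Import numFieldNormedType.Exports.
Local Open Scope ring_scope.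

Section RowCalculus.
Context {R : realType} {m : nat}.
Implicit Types (f g : 'rV[R]_m.+1 -> R) (x v : 'rV[R]_m.+1).

Lemma differentiable_xc x i : differentiable (fun y => xc y i) x.
Proof. exact: differentiable_coord. Qed.

Lemma differentiable_expr f x n :
  differentiable f x -> differentiable (fun y => f y ^+ n) x.
Proof.
move=> df; elim: n => [|n IH].
  by under eq_fun do rewrite expr0; exact: differentiable_cst.
by under eq_fun do rewrite exprS; exact: differentiableM.
Qed.

Lemma differentiable_row n (F : 'rV[R]_m.+1 -> 'rV[R]_n) x :
  (forall j, differentiable (fun y => F y ord0 j) x) -> differentiable F x.
Proof.
move=> dF; have -> : F = \sum_(j < n) (fun y => F y ord0 j *: delta_mx ord0 j).
  by rewrite fct_sumE; apply/funext => y; rewrite {1}(row_sum_delta (F y)).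
by apply: differentiable_sum => j; exact: differentiableZl.
Qed.

Lemma derive_xc x v i : 'D_v (fun y => xc y i) x = xc v i.
Proof.
have := derive_mx (@derivable_id _ _ x v); rewrite derive_id.
by move=> /(congr1 (fun M : 'rV_m.+1 => M ord0 (inord i))); rewrite mxE.
Qed.

Lemma xc_diff n (F : 'rV[R]_m.+1 -> 'rV[R]_n.+1) x v k : differentiable F x ->
  xc ('d F x v) k = 'D_v (fun y => xc (F y) k) x.
Proof.
move=> dF; rewrite -deriveE // derive_mx; last exact: diff_derivable.
by rewrite /xc mxE.
Qed.

Lemma diff_deriveD f g x v : differentiable f x -> differentiable g x ->
  'D_v (fun y => f y + g y) x = 'D_v f x + 'D_v g x.
Proof. by move=> df dg; apply: (@deriveD _ _ _ f g); apply: diff_derivable. Qed.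

Lemma diff_deriveN f x v : differentiable f x ->
  'D_v (fun y => - f y) x = - 'D_v f x.
Proof. by move=> df; apply: (@deriveN _ _ _ f); apply: diff_derivable. Qed.

Lemma diff_deriveM f g x v : differentiable f x -> differentiable g x ->
  'D_v (fun y => f y * g y) x = f x * 'D_v g x + g x * 'D_v f x.
Proof. by move=> df dg; rewrite (@deriveM _ _ f g) //; apply: diff_derivable. Qed.

Lemma diff_deriveV f x v : differentiable f x -> f x != 0 ->
  'D_v (fun y => (f y)^-1) x = - (f x) ^- 2 * 'D_v f x.
Proof. by move=> df fx; rewrite deriveV //; apply: diff_derivable. Qed.

Lemma diff_deriveX f x v n : differentiable f x ->
  'D_v (fun y => f y ^+ n) x = n%:R * f x ^+ n.-1 * 'D_v f x.
Proof.
by move=> df; rewrite -exprfctE deriveX //; apply: diff_derivable.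
Qed.

Lemma xc_row n (s : seq R) k : (k < n.+1)%N ->
  xc (\row_(i < n.+1) nth 0 s i) k = nth 0 s k.
Proof. by move=> hk; rewrite /xc mxE inordK. Qed.

Lemma row_xc_eq0 v : (forall k, (k < m.+1)%N -> xc v k = 0) -> v = 0.
Proof.
move=> v0; apply/rowP => i; rewrite !mxE -(inord_val i).
exact: v0.
Qed.

End RowCalculus.

Ltac differentiable_tac := repeat first
  [ apply: differentiable_xc | apply: differentiable_cst | apply: differentiableD
  | apply: differentiableN | apply: differentiableM | apply: differentiable_expr
  | apply: differentiableV ].

Ltac derive_tac := repeat first
  [ rewrite derive_xc | rewrite derive_cst | rewrite diff_deriveD | rewrite diff_deriveN
  | rewrite diff_deriveM | rewrite diff_deriveX | rewrite diff_deriveV ];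
  try (solve [differentiable_tac; cbv beta; rewrite ?mulf_neq0 ?expf_neq0 ?invr_neq0 //]).

Lemma torusP (R : realType) (x : 'rV[R]_4) : torus4 x ->
  [/\ xc x 0 != 0, xc x 1 != 0, xc x 2 != 0 & xc x 3 != 0].
Proof. by move=> tx; split; apply: tx. Qed.

Section Omega.
Variables (R : realType) (c : nat).
Implicit Types (x v w : 'rV[R]_4).

Lemma closed_omega : closed2 (@torus4 R) (omega c).
Proof.
move=> x /torusP[x0 x1 x2 x3] u v w; rewrite /omega /logwedge /wedge.
derive_tac; field.
by rewrite x0 x1 x2 x3.
Qed.

(* Row k is x_i times row k of the Pfaffian adjugate of the coefficient
   matrix of omega in the basis dlog x_i. *)
Definition omega_dual x (k : nat) : 'rV[R]_4 :=
  \row_(i < 4) nth 0 (nth [::]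
    [:: [:: 0; xc x 1; c%:R * xc x 2; (c%:R + 1) * xc x 3];
        [:: - xc x 0; 0; xc x 2; c%:R * xc x 3];
        [:: - c%:R * xc x 0; - xc x 1; 0; xc x 3];
        [:: - (c%:R + 1) * xc x 0; - c%:R * xc x 1; - xc x 2; 0]] k) i.

Lemma omega_dualE {x} v {k} : torus4 x -> (k < 4)%N ->
  omega c x v (omega_dual x k) = (1 + c%:R) * (2 - c%:R) * (xc v k / xc x k).
Proof.
move=> /torusP[x0 x1 x2 x3].
rewrite /omega /logwedge /wedge /omega_dual.
by case: k => [|[|[|[|]]]] // _; rewrite !xc_row //=; field; rewrite x0 x1 x2 x3.
Qed.

Lemma nondeg_omega x : c <> 2%N -> torus4 x -> nondeg_bilin (omega c x).
Proof.
move=> c_neq2 tx v omega_v0; apply: row_xc_eq0 => k k_lt4.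
have c_factor_neq0 : (1 + c%:R) * (2 - c%:R) != 0 :> R.
  rewrite mulf_neq0 // subr_eq0 (eqr_nat R 2 c).
  by apply/eqP => /esym.
move: (omega_dualE v tx k_lt4); rewrite omega_v0 => /esym/eqP.
rewrite mulf_eq0 (negbTE c_factor_neq0) mulf_eq0 invr_eq0 (negbTE (tx _)) orbF.
by move/eqP.
Qed.

Lemma omega2_kernel {x} w : torus4 x ->
  omega 2 x (\row_(i < 4) ((i.+1)%:R * x ord0 i)) w = 0.
Proof.
move=> /torusP[x0 x1 x2 x3]; rewrite /omega /logwedge /wedge /xc !mxE !inordK //.
by field; rewrite x0 x1 x2 x3.
Qed.

Lemma degenerate_omega2 x : torus4 x -> ~ nondeg_bilin (omega 2 x).
Proof.
move=> tx nondeg; have /rowP/(_ ord0) := nondeg _ (fun w => omega2_kernel w tx).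
by rewrite !mxE mul1r; apply/eqP; exact: tx.
Qed.

End Omega.

Section Phi.
Variables (R : realType) (c : nat) (beta : R).
Implicit Types (x v w : 'rV[R]_4).

Lemma differentiable_phi x : xc x 0 != 0 -> differentiable (phi c beta) x.
Proof.
move=> x0; apply: differentiable_row => j.
under eq_fun do rewrite mxE.
by case: j => [[|[|[|[|j]]]] j_lt4] //=; differentiable_tac; rewrite ?mulf_neq0.
Qed.

Lemma dphi_shift x v k : xc x 0 != 0 -> (k < 3)%N ->
  xc ('d (phi c beta) x v) k = xc v k.+1.
Proof.
move=> x0 k_lt3; rewrite xc_diff; last exact: differentiable_phi.
under eq_fun do rewrite xc_row ?(ltn_trans k_lt3) //.
by case: k k_lt3 => [|[|[|]]] // _; rewrite derive_xc.
Qed.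

(* x_2^(c-1) is written x_2^c / x_2, so that c = 0 needs no separate case. *)
Lemma dphi_last x v : xc x 0 != 0 -> xc x 2 != 0 ->
  xc ('d (phi c beta) x v) 3 =
    (xc x 3 * xc v 1 + xc x 1 * xc v 3 + c%:R * beta * xc x 2 ^+ c * (xc v 2 / xc x 2)
     - xc (phi c beta x) 3 * xc v 0) / xc x 0.
Proof.
move=> x0 x2; rewrite xc_diff; last exact: differentiable_phi.
under eq_fun do rewrite xc_row //=.
derive_tac; rewrite xc_row //=.
case: c => [|n]; first by rewrite !mul0r; field.
by rewrite [n.+1.-1]/= exprS; field; rewrite x0 x2.
Qed.

Lemma pullback_phi x v w : torus4 x -> torus4 (phi c beta x) ->
  pullback2 (phi c beta) (omega c) x v w = omega c x v w.
Proof.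
move=> /torusP[x0 x1 x2 x3] /torusP[_ _ _]; rewrite xc_row //= => phi3.
have num_neq0 : xc x 1 * xc x 3 + beta * xc x 2 ^+ c != 0.
  by apply: contraNneq phi3 => ->; rewrite mul0r.
rewrite /pullback2 /omega /logwedge /wedge !dphi_last // !dphi_shift // !xc_row //=.
by field; rewrite x0 x1 x2 x3 num_neq0.
Qed.

End Phi.

Section Psi.
Variable R : realType.
Implicit Types (x v w : 'rV[R]_4).

Lemma differentiable_psi x : xc x 1 != 0 -> xc x 2 != 0 -> differentiable (@psi R) x.
Proof.
move=> x1 x2; apply: differentiable_row => j.
under eq_fun do rewrite mxE.
by case: j => [[|[|j]] j_lt2] //=; differentiable_tac; rewrite ?expf_neq0.
Qed.

Lemma dpsi {x} v : torus4 x ->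
  xc ('d (@psi R) x v) 0 =
    xc (psi x) 0 * (xc v 0 / xc x 0 - 2 * (xc v 1 / xc x 1) + xc v 2 / xc x 2)
  /\ xc ('d (@psi R) x v) 1 =
    xc (psi x) 1 * (xc v 1 / xc x 1 - 2 * (xc v 2 / xc x 2) + xc v 3 / xc x 3).
Proof.
move=> /torusP[x0 x1 x2 x3].
rewrite !xc_diff; try exact: differentiable_psi.
rewrite !xc_row //=.
split; under eq_fun do rewrite xc_row //=; derive_tac; by field; rewrite ?x0 ?x1 ?x2 ?x3.
Qed.

Lemma pullback_psi x v w : torus4 x ->
  omega 2 x v w = pullback2 (@psi R) (@eta2 R) x v w.
Proof.
move=> tx; have [dpsi0 dpsi1] := dpsi v tx; have [dpsi0' dpsi1'] := dpsi w tx.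
case/torusP: tx => x0 x1 x2 x3.
rewrite /pullback2 /eta2 /logwedge /wedge dpsi0 dpsi1 dpsi0' dpsi1' /psi !xc_row //=.
by rewrite /omega /logwedge /wedge; field; rewrite x0 x1 x2 x3.
Qed.

End Psi.

Theorem corollary3p3 (R : realType) (c : nat) (beta : R) :
  (* phi^* omega = omega wherever both sides are defined *)
  (forall x : 'rV[R]_4, @torus4 R x ->
     @torus4 R (phi c beta x) ->
     forall v w, pullback2 (phi c beta) (omega c) x v w = omega c x v w)
  /\ (c <> 2%N -> symplectic (@torus4 R) (omega c))
  /\ (c = 2%N ->
       (forall x : 'rV[R]_4, @torus4 R x -> ~ nondeg_bilin (omega c x))
       /\ (forall x : 'rV[R]_4, @torus4 R x ->
             forall v w, omega c x v w = pullback2 (@psi R) (@eta2 R) x v w)).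
Proof.
split; first by move=> x v w tx tphi; exact: pullback_phi.
split=> [c_neq2 | ->].
  by split; [exact: closed_omega | move=> x; exact: nondeg_omega].
split; first exact: degenerate_omega2.
by move=> x tx v w; exact: pullback_psi.
Qed.
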